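(* Let $S$ be a semigroup with apartness satisfying assumption (CD$_S$), and let $e\in S$ be an idempotent. Then $e\tilde{\mathcal H}=\{x\in S\mid e\,\tilde{\mathcal H}\,x\}$ is a co-subsemigroup of $S$, i.e. it is a strongly extensional subset and $xy\in e\tilde{\mathcal H}\Rightarrow(x\in e\tilde{\mathcal H}\vee y\in e\tilde{\mathcal H})$ for all $x,y\in S$.
   Context: Constructive (intuitionistic) mathematics. A semigroup with apartness is a semigroup with an apartness relation $\#$ (irreflexive, symmetric, cotransitive: $x\#z\Rightarrow(x\#y\vee y\#z)$) such that $xy\#zw\Rightarrow(x\#z\vee y\#w)$. $S^1=S\sqcup\{1\}$, $1$ an identity, $1\#s$ for all $s\in S$. $a\succ_l b\Leftrightarrow\forall_{s\in S^1}(a\#sb)$; $a\succ_r b\Leftrightarrow\forall_{s\in S^1}(a\#bs)$; $\tilde{\mathcal L}=(\succ_l)\cup(\succ_l)^{-1}$, $\tilde{\mathcal R}=(\succ_r)\cup(\succ_r)^{-1}$, $\tilde{\mathcal H}=\tilde{\mathcal L}\cup\tilde{\mathcal R}$. A subset $A$ is strongly extensional if $a\in A\Rightarrow(x\in A\vee x\#a)$. Assumption (CD$_S$): for every predicate $P(x)$ of the form $u(x)\#v$ or $\forall_s(u(s,x)\#v)$ ($u,v$ terms built by multiplication from variables and elements of $S^1$, $x$ not occurring in $v$), and every $Q$ of the form $u\#v$, $\forall_s(u(s)\#v)$ or $\forall_{s,t}(u(s,t)\#v)$ ($x$ not occurring in $u,v$; $s,t$ not in $v$), the implication $\forall_x(P(x)\vee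 Q)\Rightarrow(\forall_xP(x))\vee Q$ holds. *)

From Stdlib Require Import List.
Import ListNotations.

Record SemigroupAp := {
  car :> Type;
  smul : car -> car -> car;
  sap : car -> car -> Prop;
  smul_assoc : forall x y z, smul x (smul y z) = smul (smul x y) z;
  sap_irrefl : forall x, ~ sap x x;
  sap_sym : forall x y, sap x y -> sap y x;
  sap_cotrans : forall x y z, sap x z -> sap x y \/ sap y z;
  sap_mul_se : forall x y z w, sap (smul x y) (smul z w) -> sap x z \/ sap y w
}.

Section S1.
Variable S : SemigroupAp.

(** S^1 = S + {1}; [None] is the adjoined identity 1. *)
Definition S1 := option (car S).

Definition mul1 (a b : S1) : S1 :=
  match a, b with
  | None, _ => b
  | _, None => a
  | Some x, Some y => Some (smul S x y)
  end.

Definition ap1 (a b : S1) : Prop :=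
  match a, b with
  | None, None => False
  | None, Some _ => True
  | Some _, None => True
  | Some x, Some y => sap S x y
  end.

Definition succ_l (a b : car S) : Prop :=
  forall s : S1, ap1 (Some a) (mul1 s (Some b)).
Definition succ_r (a b : car S) : Prop :=
  forall s : S1, ap1 (Some a) (mul1 (Some b) s).

Definition Ltilde (a b : car S) : Prop := succ_l a b \/ succ_l b a.
Definition Rtilde (a b : car S) : Prop := succ_r a b \/ succ_r b a.
Definition Htilde (a b : car S) : Prop := Ltilde a b \/ Rtilde a b.

Definition Hclass (e : car S) : car S -> Prop := fun x => Htilde e x.

Definition strongly_extensional (A : car S -> Prop) : Prop :=
  forall a x, A a -> A x \/ sap S x a.

Definition co_subsemigroup (A : car S -> Prop) : Prop :=
  strongly_extensional A /\
  (forall x y, A (smul S x y) -> A x \/ A y).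

(** Terms built by multiplication from variables and elements of S^1.
    Variable 0 is x, variable 1 is s, variable 2 is t. *)
Inductive term :=
| TVar : nat -> term
| TConst : S1 -> term
| TMul : term -> term -> term.

Fixpoint eval (env : nat -> S1) (u : term) : S1 :=
  match u with
  | TVar i => env i
  | TConst a => a
  | TMul u1 u2 => mul1 (eval env u1) (eval env u2)
  end.

Fixpoint vars_in (l : list nat) (u : term) : Prop :=
  match u with
  | TVar i => In i l
  | TConst _ => True
  | TMul u1 u2 => vars_in l u1 /\ vars_in l u2
  end.

Definition env3 (x s t : S1) : nat -> S1 :=
  fun i => match i with 0 => x | 1 => s | _ => t end.

Inductive Pform : (car S -> Prop) -> Prop :=
| Pf1 : forall u v, vars_in [0] u -> vars_in [] v ->
    Pform (fun x => ap1 (eval (env3 (Some x) None None) u)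
                        (eval (env3 (Some x) None None) v))
| Pf2 : forall u v, vars_in [0; 1] u -> vars_in [1] v ->
    Pform (fun x => forall s : S1,
             ap1 (eval (env3 (Some x) s None) u) (eval (env3 (Some x) s None) v)).

Inductive Qform : Prop -> Prop :=
| Qf1 : forall u v, vars_in [] u -> vars_in [] v ->
    Qform (ap1 (eval (env3 None None None) u) (eval (env3 None None None) v))
| Qf2 : forall u v, vars_in [1] u -> vars_in [] v ->
    Qform (forall s : S1,
             ap1 (eval (env3 None s None) u) (eval (env3 None s None) v))
| Qf3 : forall u v, vars_in [1; 2] u -> vars_in [] v ->
    Qform (forall s t : S1,
             ap1 (eval (env3 None s t) u) (eval (env3 None s t) v)).

Definition CD_S : Prop :=
  forall (P : car S -> Prop) (Q : Prop), Pform P -> Qform Q ->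
    (forall x, P x \/ Q) -> (forall x, P x) \/ Q.

End S1.

(** - (CD_S) is invariant under logical equivalence of the predicates
     involved, and extends from quantification over S to quantification
     over S^1; its typical use is [cd_succ_l]/[cd_succ_r]: a pointwise
     disjunction "a # s b or Q" over s in S^1 yields "a >_l b or Q".
   - The relation >_l is strongly extensional in both arguments, which
     gives strong extensionality of e H~ along L~.
   - If e >_l xy then e >_l x or e >_l ey; and for e idempotent,
     e >_l ey forces e >_l y or y >_r e.  If xy >_l e then y >_l e.
     Hence L~-membership of xy in e H~ puts x or y in e H~.
   - Everything stated for L~ transfers to R~ through the opposite
     semigroup S^op, whose >_l is the >_r of S; (CD_S) passes to S^op
     by reversing terms. *)


Section MonoidWithApartness.
Variable S : SemigroupAp.

Lemma ap1_irrefl (a : S1 S) : ~ ap1 S a a.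
Proof. destruct a; simpl; auto using sap_irrefl. Qed.

Lemma ap1_sym (a b : S1 S) : ap1 S a b -> ap1 S b a.
Proof. destruct a, b; simpl; auto using sap_sym. Qed.

Lemma ap1_cotrans (a b c : S1 S) : ap1 S a c -> ap1 S a b \/ ap1 S b c.
Proof. destruct a, b, c; simpl; auto using sap_cotrans; tauto. Qed.

Lemma mul1_assoc (a b c : S1 S) :
  mul1 S a (mul1 S b c) = mul1 S (mul1 S a b) c.
Proof. destruct a, b, c; simpl; auto. now rewrite smul_assoc. Qed.

Lemma ap1_mul_se (a b c d : S1 S) :
  ap1 S (mul1 S a b) (mul1 S c d) -> ap1 S a c \/ ap1 S b d.
Proof. destruct a, b, c, d; simpl; auto using sap_mul_se; tauto. Qed.

Lemma ap1_cancel_l (a b c : S1 S) :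
  ap1 S (mul1 S c a) (mul1 S c b) -> ap1 S a b.
Proof.
  intro H; destruct (ap1_mul_se _ _ _ _ H) as [Hc | Hab]; auto.
  now apply ap1_irrefl in Hc.
Qed.

Lemma ap1_cancel_r (a b c : S1 S) :
  ap1 S (mul1 S a c) (mul1 S b c) -> ap1 S a b.
Proof.
  intro H; destruct (ap1_mul_se _ _ _ _ H) as [Hab | Hc]; auto.
  now apply ap1_irrefl in Hc.
Qed.

End MonoidWithApartness.

Section ConstructiveDistributivity.
Variable S : SemigroupAp.
Hypothesis HCD : CD_S S.

Definition P_adm (P : car S -> Prop) : Prop :=
  exists P', Pform S P' /\ forall x, P x <-> P' x.

Definition Q_adm (Q : Prop) : Prop :=
  exists Q', Qform S Q' /\ (Q <-> Q').

Lemma CD_adm (P : car S -> Prop) (Q : Prop) :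
  P_adm P -> Q_adm Q -> (forall x, P x \/ Q) -> (forall x, P x) \/ Q.
Proof.
  intros [P' [HP' EP]] [Q' [HQ' EQ]] H.
  destruct (HCD P' Q' HP' HQ') as [A | A].
  - intro x; destruct (H x) as [h | h]; [left; apply EP | right; apply EQ]; exact h.
  - left; intro x; apply EP, A.
  - right; apply EQ, A.
Qed.

(** (CD_S) with the variable ranging over S^1: the extra point 1 is
    handled by the hypothesis itself. *)
Lemma CD_S1 (P : S1 S -> Prop) (Q : Prop) :
  P_adm (fun x => P (Some x)) -> Q_adm Q ->
  (forall s, P s \/ Q) -> (forall s, P s) \/ Q.
Proof.
  intros HP HQ H.
  destruct (H None) as [P1 | Hq]; [| now right].
  destruct (CD_adm _ _ HP HQ (fun x => H (Some x))) as [A | Hq]; [| now right].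
  left; intros [x |]; auto.
Qed.

Lemma Q_adm_ap1 (p q : S1 S) : Q_adm (ap1 S p q).
Proof.
  eexists; split; [exact (Qf1 S (TConst S p) (TConst S q) I I) | reflexivity].
Qed.

Lemma Q_adm_succ_l (m k : car S) : Q_adm (succ_l S m k).
Proof.
  eexists; split.
  - exact (Qf2 S (TMul S (TVar S 1) (TConst S (Some k))) (TConst S (Some m))
             (conj (or_introl eq_refl) I) I).
  - split; intros H s; apply ap1_sym, H.
Qed.

Lemma P_adm_left (m k : car S) :
  P_adm (fun x => ap1 S (Some m) (mul1 S (Some x) (Some k))).
Proof.
  eexists; split.
  - exact (Pf1 S (TMul S (TVar S 0) (TConst S (Some k))) (TConst S (Some m))
             (conj (or_introl eq_refl) I) I).
  - split; apply ap1_sym.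
Qed.

Lemma P_adm_right (m k : car S) :
  P_adm (fun x => ap1 S (Some m) (mul1 S (Some k) (Some x))).
Proof.
  eexists; split.
  - exact (Pf1 S (TMul S (TConst S (Some k)) (TVar S 0)) (TConst S (Some m))
             (conj I (or_introl eq_refl)) I).
  - split; apply ap1_sym.
Qed.

Lemma cd_succ_l (m k : car S) (Q : Prop) : Q_adm Q ->
  (forall s, ap1 S (Some m) (mul1 S s (Some k)) \/ Q) -> succ_l S m k \/ Q.
Proof. apply CD_S1, P_adm_left. Qed.

Lemma cd_succ_r (m k : car S) (Q : Prop) : Q_adm Q ->
  (forall s, ap1 S (Some m) (mul1 S (Some k) s) \/ Q) -> succ_r S m k \/ Q.
Proof. apply CD_S1, P_adm_right. Qed.

End ConstructiveDistributivity.

Section LeftSide.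
Variable S : SemigroupAp.
Hypothesis HCD : CD_S S.

Lemma succ_l_se_fst (a b x : car S) :
  succ_l S a b -> succ_l S x b \/ sap S x a.
Proof.
  intro H; apply (cd_succ_l S HCD _ _ _ (Q_adm_ap1 S (Some x) (Some a))).
  intro s; destruct (ap1_cotrans S _ (Some x) _ (H s)) as [h | h].
  - right; now apply ap1_sym.
  - now left.
Qed.

Lemma succ_l_se_snd (a b x : car S) :
  succ_l S b a -> succ_l S b x \/ sap S x a.
Proof.
  intro H; apply (cd_succ_l S HCD _ _ _ (Q_adm_ap1 S (Some x) (Some a))).
  intro s; destruct (ap1_cotrans S _ (mul1 S s (Some x)) _ (H s)) as [h | h].
  - now left.
  - right; exact (ap1_cancel_l S _ _ _ h).
Qed.

Lemma succ_l_mul_r (x y b : car S) :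
  succ_l S (smul S x y) b -> succ_l S y b.
Proof.
  intros H s.
  pose proof (H (mul1 S (Some x) s)) as h.
  change (Some (smul S x y)) with (mul1 S (Some x) (Some y)) in h.
  rewrite <- mul1_assoc in h.
  exact (ap1_cancel_l S _ _ _ h).
Qed.

Lemma succ_l_mul_split (a x y : car S) :
  succ_l S a (smul S x y) -> succ_l S a x \/ succ_l S a (smul S a y).
Proof.
  intro H.
  assert (pointwise : forall c b, ap1 S (Some a) (mul1 S b (Some x)) \/
                                  ap1 S (Some a) (mul1 S c (Some (smul S a y)))).
  { intros c b.
    destruct (ap1_cotrans S _ (mul1 S c (Some (smul S a y))) _ (H (mul1 S c b)))
      as [h | h]; [now right | left].
    (* a y # (c b) (x y) = c ((b x) y) cancels to a # b x *)
    change (Some (smul S x y)) with (mul1 S (Some x) (Some y)) in h.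
    rewrite <- mul1_assoc, (mul1_assoc S b) in h.
    change (Some (smul S a y)) with (mul1 S (Some a) (Some y)) in h.
    exact (ap1_cancel_r S _ _ _ (ap1_cancel_l S _ _ _ h)). }
  assert (Hc : forall c, ap1 S (Some a) (mul1 S c (Some (smul S a y))) \/
                         succ_l S a x).
  { intro c; apply or_comm, cd_succ_l; [exact HCD | apply Q_adm_ap1 |].
    intro b; apply pointwise. }
  apply or_comm, cd_succ_l; [exact HCD | apply Q_adm_succ_l | exact Hc].
Qed.

Lemma succ_l_idem (e y : car S) : smul S e e = e ->
  succ_l S e (smul S e y) -> succ_l S e y \/ succ_r S y e.
Proof.
  intros He H.
  assert (idem : forall d, mul1 S (Some e) (mul1 S (Some e) d) = mul1 S (Some e) d).
  { intro d; rewrite mul1_assoc; simpl; now rewrite He. }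
  assert (pointwise : forall d c, ap1 S (Some e) (mul1 S c (Some y)) \/
                                  ap1 S (Some y) (mul1 S (Some e) d)).
  { intros d c.
    destruct (ap1_cotrans S _ (mul1 S c (mul1 S (Some e) d)) _ (H c)) as [h | h].
    - destruct (ap1_cotrans S _ (mul1 S c (Some y)) _ h) as [h' | h'].
      + now left.
      + right; exact (ap1_cancel_l S _ _ _ h').
    - (* c (e d) # c (e y) gives e (e d) # e y, hence e d # y *)
      right; apply ap1_sym, (ap1_cancel_l S _ _ (Some e)).
      rewrite idem.
      exact (ap1_cancel_l S _ _ _ h). }
  assert (Hd : forall d, ap1 S (Some y) (mul1 S (Some e) d) \/ succ_l S e y).
  { intro d; apply or_comm, cd_succ_l; [exact HCD | apply Q_adm_ap1 |].
    intro c; apply pointwise. }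
  apply or_comm, cd_succ_r; [exact HCD | apply Q_adm_succ_l | exact Hd].
Qed.

Lemma Hclass_se_L (e a x : car S) :
  Ltilde S e a -> Hclass S e x \/ sap S x a.
Proof.
  intros [H | H].
  - destruct (succ_l_se_snd a e x H) as [h | h]; [left; left; now left | now right].
  - destruct (succ_l_se_fst a e x H) as [h | h]; [left; left; now right | now right].
Qed.

Lemma Hclass_prime_L (e x y : car S) : smul S e e = e ->
  Ltilde S e (smul S x y) -> Hclass S e x \/ Hclass S e y.
Proof.
  intros He [H | H].
  - destruct (succ_l_mul_split e x y H) as [h | h]; [left; left; now left | right].
    destruct (succ_l_idem e y He h) as [h' | h']; [left; now left | right; now right].
  - right; left; right; exact (succ_l_mul_r x y e H).
Qed.

End LeftSide.

Section Opposite.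
Variable S : SemigroupAp.

Lemma opp_assoc (x y z : car S) :
  smul S (smul S z y) x = smul S z (smul S y x).
Proof. symmetry; apply smul_assoc. Qed.

Lemma opp_mul_se (x y z w : car S) :
  sap S (smul S y x) (smul S w z) -> sap S x z \/ sap S y w.
Proof. intro H; apply or_comm, sap_mul_se, H. Qed.

Definition opp : SemigroupAp := {|
  car := car S;
  smul := fun x y => smul S y x;
  sap := sap S;
  smul_assoc := opp_assoc;
  sap_irrefl := sap_irrefl S;
  sap_sym := sap_sym S;
  sap_cotrans := sap_cotrans S;
  sap_mul_se := opp_mul_se |}.

Lemma mul1_opp (a b : S1 opp) : mul1 opp a b = mul1 S b a.
Proof. now destruct a, b. Qed.

Lemma succ_l_opp (a b : car S) : succ_l opp a b <-> succ_r S a b.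
Proof. split; intros H s; [rewrite <- mul1_opp | rewrite mul1_opp]; apply H. Qed.

Lemma succ_r_opp (a b : car S) : succ_r opp a b <-> succ_l S a b.
Proof. split; intros H s; [rewrite <- mul1_opp | rewrite mul1_opp]; apply H. Qed.

Lemma Rtilde_opp (a b : car S) : Rtilde S a b -> Ltilde opp a b.
Proof. intros [H | H]; [left | right]; apply succ_l_opp, H. Qed.

Lemma Hclass_opp (e x : car S) : Hclass opp e x -> Hclass S e x.
Proof.
  intros [[H | H] | [H | H]];
    [right; left | right; right | left; left | left; right];
    first [apply succ_l_opp | apply succ_r_opp]; exact H.
Qed.

Fixpoint term_rev (u : term opp) : term S :=
  match u with
  | TVar _ i => TVar S i
  | TConst _ a => TConst S a
  | TMul _ u1 u2 => TMul S (term_rev u2) (term_rev u1)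
  end.

Lemma eval_rev (env : nat -> S1 S) (u : term opp) :
  eval opp env u = eval S env (term_rev u).
Proof.
  induction u as [| | u1 IH1 u2 IH2]; simpl; auto.
  now rewrite mul1_opp, IH1, IH2.
Qed.

Lemma vars_in_rev (l : list nat) (u : term opp) :
  vars_in opp l u -> vars_in S l (term_rev u).
Proof. induction u; simpl; tauto. Qed.

Lemma Pform_opp (P : car S -> Prop) : Pform opp P -> P_adm S P.
Proof.
  intros [u v Hu Hv | u v Hu Hv]; eexists; split.
  - exact (Pf1 S (term_rev u) (term_rev v) (vars_in_rev _ _ Hu) (vars_in_rev _ _ Hv)).
  - intro x; now rewrite !eval_rev.
  - exact (Pf2 S (term_rev u) (term_rev v) (vars_in_rev _ _ Hu) (vars_in_rev _ _ Hv)).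
  - intro x; split; intros H s; specialize (H s); now rewrite ?eval_rev in *.
Qed.

Lemma Qform_opp (Q : Prop) : Qform opp Q -> Q_adm S Q.
Proof.
  intros [u v Hu Hv | u v Hu Hv | u v Hu Hv]; eexists; split.
  - exact (Qf1 S (term_rev u) (term_rev v) (vars_in_rev _ _ Hu) (vars_in_rev _ _ Hv)).
  - now rewrite !eval_rev.
  - exact (Qf2 S (term_rev u) (term_rev v) (vars_in_rev _ _ Hu) (vars_in_rev _ _ Hv)).
  - split; intros H s; specialize (H s); now rewrite ?eval_rev in *.
  - exact (Qf3 S (term_rev u) (term_rev v) (vars_in_rev _ _ Hu) (vars_in_rev _ _ Hv)).
  - split; intros H s t; specialize (H s t); now rewrite ?eval_rev in *.
Qed.

Lemma CD_S_opp : CD_S S -> CD_S opp.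
Proof.
  intros HCD P Q HP HQ.
  exact (CD_adm S HCD P Q (Pform_opp P HP) (Qform_opp Q HQ)).
Qed.

End Opposite.

Theorem mainTheorem18 (S : SemigroupAp) (HCD : CD_S S) (e : car S)
  (He : smul S e e = e) :
  co_subsemigroup S (Hclass S e).
Proof.
  pose proof (CD_S_opp S HCD) as HCDop.
  split.
  - intros a x [HL | HR].
    + exact (Hclass_se_L S HCD e a x HL).
    + destruct (Hclass_se_L (opp S) HCDop e a x (Rtilde_opp S e a HR)) as [H | H].
      * left; exact (Hclass_opp S e x H).
      * now right.
  - intros x y [HL | HR].
    + exact (Hclass_prime_L S HCD e x y He HL).
    + (* x y in S is y x in S^op *)
      destruct (Hclass_prime_L (opp S) HCDop e y x He (Rtilde_opp S e _ HR)) as [H | H].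
      * right; exact (Hclass_opp S e y H).
      * left; exact (Hclass_opp S e x H).
Qed.
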